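(* Let $\|\cdot\|$ be a URTC-norm on $\mathbb{R}^2$ with unit sphere $S$. Define $f\colon S\to S$ by letting $f(z)$ be the unique point of $S$ such that $\|z-f(z)\|=1$ and the triangle $(0,z,f(z))$ is positively oriented. Then $f$ is continuous.
   Context: A norm $\|\cdot\|$ on $\mathbb{R}^2$ is called a URTC-norm if for every $a,b\in\mathbb{R}^2$ with $\|a-b\|=1$ the system $\|a-x\|=1$, $\|b-x\|=1$ is satisfied by exactly two points $x\in\mathbb{R}^2$ (for $a=0$, $b=z\in S$ these two points lie on opposite sides of the line through $0$ and $z$, so $f$ is well defined). $S=\{x:\|x\|=1\}$. A triangle $(p,q,r)$ is positively oriented if its vertices are in counterclockwise order. *)

From Stdlib Require Import Reals.
Open Scope R_scope.

Definition pt := (R * R)%type.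

Definition padd (a b : pt) : pt := (fst a + fst b, snd a + snd b).
Definition psub (a b : pt) : pt := (fst a - fst b, snd a - snd b).
Definition pscal (t : R) (a : pt) : pt := (t * fst a, t * snd a).

Definition is_norm (N : pt -> R) : Prop :=
  (forall x, 0 <= N x) /\
  (forall x, N x = 0 -> x = (0, 0)) /\
  (forall t x, N (pscal t x) = Rabs t * N x) /\
  (forall x y, N (padd x y) <= N x + N y).

Definition URTC (N : pt -> R) : Prop :=
  is_norm N /\
  forall a b : pt, N (psub a b) = 1 ->
    exists x1 x2 : pt, x1 <> x2 /\
      forall x : pt, (N (psub a x) = 1 /\ N (psub b x) = 1) <-> (x = x1 \/ x = x2).

Definition pos_oriented (z w : pt) : Prop := fst z * snd w - snd z * fst w > 0.

Definition edist (a b : pt) : R :=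
  sqrt ((fst a - fst b) ^ 2 + (snd a - snd b) ^ 2).

Definition sphere (N : pt -> R) (x : pt) : Prop := N x = 1.

Definition continuous_on_set (S : pt -> Prop) (f : pt -> pt) : Prop :=
  forall z, S z -> forall eps, eps > 0 -> exists delta, delta > 0 /\
    forall w, S w -> edist w z < delta -> edist (f w) (f z) < eps.

(** The map [f] has a closed graph with values in a bounded set, which forces
    continuity. Indeed, [f z] is the unique point [x] with [||x|| = 1],
    [||z - x|| = 1] and [det (z, x) >= 0]: the URTC property leaves only two
    unit-distance neighbours of both [0] and [z], one of them being
    [z - f z], which lies on the negative side of the line [0z]. These three
    conditions are closed, and the unit sphere is bounded because all norms on
    the plane dominate the coordinates. If [f] were discontinuous at [z], a
    sequence [w_n -> z] with [f w_n] far from [f z] would have, by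
    Bolzano-Weierstrass, a cluster value of [f w_n] satisfying the three
    conditions at [z], i.e. equal to [f z]: a contradiction. *)

From Stdlib Require Import Reals Lra Lia Classical ClassicalEpsilon.
Open Scope R_scope.

Lemma Rabs_le_between x b : Rabs x <= b -> -b <= x <= b.
Proof. unfold Rabs; destruct (Rcase_abs x); lra. Qed.

Lemma eq_of_forall_Rabs_le a b C :
  (forall e, 0 < e -> Rabs (a - b) <= C * e) -> a = b.
Proof.
  intros H. destruct (Req_dec a b) as [|Hne]; auto. exfalso.
  assert (P : 0 < Rabs (a - b)) by (apply Rabs_pos_lt; lra).
  destruct (Rle_dec C 0).
  - pose proof (H 1 ltac:(lra)); lra.
  - pose proof (H (Rabs (a - b) / (2 * C)) ltac:(apply Rdiv_lt_0_compat; lra)) as He.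
    replace (C * (Rabs (a - b) / (2 * C))) with (Rabs (a - b) / 2) in He
      by (field; lra).
    lra.
Qed.

Lemma ge0_of_forall_ge a C : (forall e, 0 < e -> - (C * e) <= a) -> 0 <= a.
Proof.
  intros H. destruct (Rle_dec 0 a) as [|Hlt]; auto. exfalso.
  destruct (Rle_dec C 0).
  - pose proof (H 1 ltac:(lra)); lra.
  - pose proof (H (- a / (2 * C)) ltac:(apply Rdiv_lt_0_compat; lra)) as He.
    replace (C * (- a / (2 * C))) with (- a / 2) in He by (field; lra).
    lra.
Qed.

Lemma lipschitz_continuity_pt (g : R -> R) L : 0 <= L ->
  (forall x y, Rabs (g x - g y) <= L * Rabs (x - y)) -> forall c, continuity_pt g c.
Proof.
  intros HL Hg c e He. exists (e / (L + 1)). split.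
  { apply Rdiv_lt_0_compat; lra. }
  intros x [_ Hx]. simpl in *. unfold R_dist in *.
  apply Rle_lt_trans with ((L + 1) * Rabs (x - c)).
  { pose proof (Hg x c); pose proof (Rabs_pos (x - c)); nra. }
  apply Rmult_lt_reg_l with (/ (L + 1)); [apply Rinv_0_lt_compat; lra|].
  rewrite <- Rmult_assoc, Rinv_l by lra. unfold Rdiv in Hx. lra.
Qed.

Lemma inv_INR_S_pos n : 0 < / INR (S n).
Proof. apply Rinv_0_lt_compat, lt_0_INR; lia. Qed.

Lemma inv_INR_S_small e : 0 < e -> exists K, forall n, (K <= n)%nat -> / INR (S n) < e.
Proof.
  intros He. destruct (archimed_cor1 e He) as [K [HK K0]]. exists K. intros n Hn.
  eapply Rle_lt_trans; [|exact HK].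
  apply Rinv_le_contravar; [apply lt_0_INR; lia | apply le_INR; lia].
Qed.

Lemma edist_ge_fst a b : Rabs (fst a - fst b) <= edist a b.
Proof.
  unfold edist. rewrite <- sqrt_Rsqr_abs. apply sqrt_le_1_alt. unfold Rsqr.
  pose proof (pow2_ge_0 (snd a - snd b)). nra.
Qed.

Lemma edist_ge_snd a b : Rabs (snd a - snd b) <= edist a b.
Proof.
  unfold edist. rewrite <- sqrt_Rsqr_abs. apply sqrt_le_1_alt. unfold Rsqr.
  pose proof (pow2_ge_0 (fst a - fst b)). nra.
Qed.

Lemma edist_le_coords a b : edist a b <= Rabs (fst a - fst b) + Rabs (snd a - snd b).
Proof.
  unfold edist.
  pose proof (Rabs_pos (fst a - fst b)); pose proof (Rabs_pos (snd a - snd b)).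
  rewrite <- (sqrt_pow2 (Rabs (fst a - fst b) + Rabs (snd a - snd b))) by lra.
  apply sqrt_le_1_alt.
  rewrite <- (pow2_abs (fst a - fst b)), <- (pow2_abs (snd a - snd b)). nra.
Qed.

Lemma edist_sym a b : edist a b = edist b a.
Proof. unfold edist. f_equal. ring. Qed.

Lemma edist_psub a b c d : edist (psub a b) (psub c d) <= 2 * (edist a c + edist b d).
Proof.
  eapply Rle_trans; [apply edist_le_coords|]. unfold psub; simpl.
  replace (fst a - fst b - (fst c - fst d)) with ((fst a - fst c) - (fst b - fst d)) by ring.
  replace (snd a - snd b - (snd c - snd d)) with ((snd a - snd c) - (snd b - snd d)) by ring.
  assert (Hsub : forall x y, Rabs (x - y) <= Rabs x + Rabs y).
  { intros x y. unfold Rminus. rewrite <- (Rabs_Ropp y). apply Rabs_triang. }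
  pose proof (Hsub (fst a - fst c) (fst b - fst d)).
  pose proof (Hsub (snd a - snd c) (snd b - snd d)).
  pose proof (edist_ge_fst a c); pose proof (edist_ge_snd a c).
  pose proof (edist_ge_fst b d); pose proof (edist_ge_snd b d).
  lra.
Qed.

Section Norm.
Variable N : pt -> R.
Hypothesis HN : is_norm N.

Lemma N_ge0 x : 0 <= N x.
Proof. destruct HN as [h _]; apply h. Qed.

Lemma N_eq0 x : N x = 0 -> x = (0, 0).
Proof. destruct HN as [_ [h _]]; apply h. Qed.

Lemma N_scal t x : N (pscal t x) = Rabs t * N x.
Proof. destruct HN as [_ [_ [h _]]]; apply h. Qed.

Lemma N_triangle x y : N (padd x y) <= N x + N y.
Proof. destruct HN as [_ [_ [_ h]]]; apply h. Qed.

Lemma N_gt0 x : x <> (0, 0) -> 0 < N x.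
Proof.
  intros Hx. destruct (N_ge0 x) as [|E]; auto.
  exfalso. apply Hx, N_eq0. auto.
Qed.

Lemma N_psub0l x : N (psub (0, 0) x) = N x.
Proof.
  replace (psub (0, 0) x) with (pscal (-1) x)
    by (unfold psub, pscal; simpl; f_equal; ring).
  rewrite N_scal, Rabs_left by lra. ring.
Qed.

Definition axis_sum := N (1, 0) + N (0, 1).

Lemma axis_sum_ge0 : 0 <= axis_sum.
Proof. unfold axis_sum. pose proof (N_ge0 (1, 0)); pose proof (N_ge0 (0, 1)). lra. Qed.

Lemma N_le_coords x : N x <= axis_sum * (Rabs (fst x) + Rabs (snd x)).
Proof.
  replace x with (padd (pscal (fst x) (1, 0)) (pscal (snd x) (0, 1)))
    at 1 by (destruct x; unfold padd, pscal; simpl; f_equal; ring).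
  eapply Rle_trans; [apply N_triangle|]. rewrite !N_scal. unfold axis_sum.
  pose proof (N_ge0 (1, 0)); pose proof (N_ge0 (0, 1)).
  pose proof (Rabs_pos (fst x)); pose proof (Rabs_pos (snd x)).
  nra.
Qed.

Lemma N_lipschitz a b :
  Rabs (N a - N b) <= axis_sum * (Rabs (fst a - fst b) + Rabs (snd a - snd b)).
Proof.
  assert (Hdiff : forall x y, N x <= N y + N (psub x y)).
  { intros x y. replace x with (padd y (psub x y)) at 1
      by (destruct x, y; unfold padd, psub; simpl; f_equal; ring).
    apply N_triangle. }
  pose proof (Hdiff a b); pose proof (Hdiff b a).
  pose proof (N_le_coords (psub a b)); pose proof (N_le_coords (psub b a)).
  unfold psub in *; simpl in *.
  rewrite (Rabs_minus_sym (fst b)), (Rabs_minus_sym (snd b)) in *.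
  apply Rabs_le; lra.
Qed.

Lemma N_lipschitz_edist a b : Rabs (N a - N b) <= 2 * axis_sum * edist a b.
Proof.
  eapply Rle_trans; [apply N_lipschitz|].
  pose proof (edist_ge_fst a b); pose proof (edist_ge_snd a b).
  pose proof axis_sum_ge0. nra.
Qed.

Lemma N_ge_sector : exists m, 0 < m /\
  forall a b, Rabs b <= Rabs a -> m * Rabs a <= N (a, b).
Proof.
  assert (Hcont : forall c, -1 <= c <= 1 -> continuity_pt (fun t => N (1, t)) c).
  { intros c _. apply (lipschitz_continuity_pt _ axis_sum axis_sum_ge0).
    intros x y. eapply Rle_trans; [apply N_lipschitz|].
    simpl. rewrite Rminus_diag, Rabs_R0, Rplus_0_l. apply Rle_refl. }
  destruct (continuity_ab_min _ (-1) 1 ltac:(lra) Hcont) as [t0 [Hmin _]].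
  exists (N (1, t0)). split.
  { apply N_gt0. intro E. injection E. lra. }
  intros a b Hba. destruct (Req_dec a 0) as [->|Ha].
  { rewrite Rabs_R0, Rmult_0_r. apply N_ge0. }
  replace (a, b) with (pscal a (1, b / a))
    by (unfold pscal; simpl; f_equal; field; auto).
  rewrite N_scal, Rmult_comm.
  apply Rmult_le_compat_l; [apply Rabs_pos|]. apply Hmin, Rabs_le_between.
  unfold Rdiv. rewrite Rabs_mult, Rabs_inv.
  pose proof (Rabs_pos_lt a Ha).
  rewrite <- (Rinv_r (Rabs a)) by lra.
  apply Rmult_le_compat_r; [apply Rlt_le, Rinv_0_lt_compat|]; lra.
Qed.

End Norm.

Lemma is_norm_swap N : is_norm N -> is_norm (fun x => N (snd x, fst x)).
Proof.
  intros HN. repeat split.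
  - intros x. apply N_ge0; auto.
  - intros [a b] E. apply (N_eq0 N HN) in E. injection E as -> ->. auto.
  - intros t x. apply (N_scal N HN t (snd x, fst x)).
  - intros x y. apply (N_triangle N HN (snd x, fst x) (snd y, fst y)).
Qed.

Lemma unit_sphere_bounded N : is_norm N ->
  exists B, forall x, N x = 1 -> Rabs (fst x) <= B /\ Rabs (snd x) <= B.
Proof.
  intros HN.
  destruct (N_ge_sector N HN) as [m [Hm Hsec]].
  destruct (N_ge_sector _ (is_norm_swap N HN)) as [m' [Hm' Hsec']].
  exists (/ m + / m'). intros [a b] Hx; simpl in *.
  assert (Hbound : forall k c, 0 < k -> k * c <= 1 -> c <= / k).
  { intros k c Hk Hkc. apply Rmult_le_reg_l with k; auto. rewrite Rinv_r; lra. }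
  pose proof (Rinv_0_lt_compat m Hm); pose proof (Rinv_0_lt_compat m' Hm').
  destruct (Rle_dec (Rabs b) (Rabs a)) as [Hba|Hab].
  - pose proof (Hbound m (Rabs a) Hm ltac:(rewrite <- Hx; auto)). lra.
  - pose proof (Hbound m' (Rabs b) Hm' ltac:(rewrite <- Hx; apply Hsec'; lra)). lra.
Qed.

Lemma bounded_seq_cluster_point (X : nat -> pt) B :
  (forall n, Rabs (fst (X n)) <= B /\ Rabs (snd (X n)) <= B) ->
  exists l, forall e, 0 < e -> forall K, exists p, (K <= p)%nat /\ edist (X p) l < e.
Proof.
  intros HB.
  destruct (Bolzano_Weierstrass (fun n => fst (X n)) _ (compact_P3 (-B) B)) as [l1 Hl1].
  { intro n. apply Rabs_le_between, HB. }
  assert (Hfst : forall k, exists p, (k <= p)%nat /\ Rabs (fst (X p) - l1) < / INR (S k)).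
  { intro k. apply (Hl1 (fun y => Rabs (y - l1) < / INR (S k)) k).
    exists (mkposreal _ (inv_INR_S_pos k)). intros y Hy. exact Hy. }
  destruct (choice _ Hfst) as [sub Hsub].
  destruct (Bolzano_Weierstrass (fun k => snd (X (sub k))) _ (compact_P3 (-B) B))
    as [l2 Hl2].
  { intro n. apply Rabs_le_between, HB. }
  exists (l1, l2). intros e He K.
  destruct (inv_INR_S_small (e / 2) ltac:(lra)) as [K0 HK0].
  destruct (Hl2 (fun y => Rabs (y - l2) < e / 2) (max K K0)) as [q [Hq Hsnd]].
  { assert (He2 : 0 < e / 2) by lra.
    exists (mkposreal _ He2). intros y Hy. exact Hy. }
  destruct (Hsub q) as [Hq_sub Hfst_q].
  exists (sub q). split; [lia|].
  eapply Rle_lt_trans; [apply edist_le_coords|]. simpl in *.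
  pose proof (HK0 q ltac:(lia)). lra.
Qed.

Section ClosedGraph.
Variables (D : pt -> Prop) (P : pt -> pt -> Prop) (f : pt -> pt) (B : R).
Hypothesis graph_f : forall z, D z -> P z (f z).
Hypothesis unique_f : forall z x, D z -> P z x -> x = f z.
Hypothesis P_bounded : forall z x, P z x -> Rabs (fst x) <= B /\ Rabs (snd x) <= B.
Hypothesis P_closed : forall z x,
  (forall e, 0 < e -> exists z' x', P z' x' /\ edist z' z < e /\ edist x' x < e) ->
  P z x.

Lemma closed_bounded_graph_continuous : continuous_on_set D f.
Proof.
  intros z Hz eps Heps. apply NNPP; intro Hdisc.
  assert (Hbad : forall n : nat, exists w,
             D w /\ edist w z < / INR (S n) /\ eps <= edist (f w) (f z)).
  { intro n. apply NNPP; intro Hnone. apply Hdisc.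
    exists (/ INR (S n)). split; [apply inv_INR_S_pos|].
    intros w Dom_w Near_w. apply Rnot_le_lt. intro Hfar. apply Hnone. eauto. }
  destruct (choice _ Hbad) as [W HW].
  destruct (bounded_seq_cluster_point (fun n => f (W n)) B) as [l Hl].
  { intro n. apply (P_bounded (W n)), graph_f, HW. }
  assert (Hlim : l = f z).
  { apply (unique_f z); auto. apply P_closed. intros e He.
    destruct (inv_INR_S_small e He) as [K HK].
    destruct (Hl e He K) as [p [Hp Hfp]].
    destruct (HW p) as [Dom_Wp [Near_Wp _]].
    exists (W p), (f (W p)). repeat split; auto.
    pose proof (HK p Hp). lra. }
  destruct (Hl eps Heps O) as [p [_ Hclose]]. destruct (HW p) as [_ [_ Hfar]].
  subst l. lra.
Qed.

End ClosedGraph.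

Lemma two_point_set_eq {T : Type} (Q : T -> Prop) x1 x2 a b c :
  (forall x, Q x <-> x = x1 \/ x = x2) ->
  Q a -> Q b -> Q c -> c <> a -> c <> b -> a = b.
Proof.
  intros HQ Ha Hb Hc. apply HQ in Ha, Hb, Hc.
  destruct Ha as [-> | ->], Hb as [-> | ->], Hc as [-> | ->]; congruence.
Qed.

Lemma psub0r z : psub z (0, 0) = z.
Proof. destruct z; unfold psub; simpl; f_equal; ring. Qed.

Lemma psub_psub z w : psub z (psub z w) = w.
Proof. destruct z, w; unfold psub; simpl; f_equal; ring. Qed.

Definition det (z w : pt) : R := fst z * snd w - snd z * fst w.

Lemma det_psub_r z w : det z (psub z w) = - det z w.
Proof. unfold det, psub; simpl. ring. Qed.

Lemma det_lipschitz a b c d M :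
  Rabs (fst a) <= M -> Rabs (snd a) <= M -> Rabs (fst d) <= M -> Rabs (snd d) <= M ->
  Rabs (det a b - det c d) <= 2 * M * (edist b d + edist a c).
Proof.
  intros Ha1 Ha2 Hd1 Hd2. unfold det.
  replace (fst a * snd b - snd a * fst b - (fst c * snd d - snd c * fst d)) with
    (fst a * (snd b - snd d) + snd d * (fst a - fst c)
     - snd a * (fst b - fst d) - fst d * (snd a - snd c)) by ring.
  assert (Hprod : forall u v D, Rabs u <= M -> Rabs v <= D -> -(M * D) <= u * v <= M * D).
  { intros u v D Hu Hv. apply Rabs_le_between. rewrite Rabs_mult.
    apply Rmult_le_compat; auto using Rabs_pos. }
  pose proof (Hprod _ _ _ Ha1 (edist_ge_snd b d)).
  pose proof (Hprod _ _ _ Hd2 (edist_ge_fst a c)).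
  pose proof (Hprod _ _ _ Ha2 (edist_ge_fst b d)).
  pose proof (Hprod _ _ _ Hd1 (edist_ge_snd a c)).
  apply Rabs_le. lra.
Qed.

Definition ccw_neighbour (N : pt -> R) (z x : pt) : Prop :=
  N x = 1 /\ N (psub z x) = 1 /\ 0 <= det z x.

Lemma ccw_neighbour_closed N : is_norm N -> forall z x,
  (forall e, 0 < e -> exists z' x',
     ccw_neighbour N z' x' /\ edist z' z < e /\ edist x' x < e) ->
  ccw_neighbour N z x.
Proof.
  intros HN z x Happrox.
  destruct (unit_sphere_bounded N HN) as [B HB].
  pose proof (N_lipschitz_edist N HN) as Hlip.
  pose proof (axis_sum_ge0 N HN).
  repeat split.
  - apply (eq_of_forall_Rabs_le _ _ (2 * axis_sum N)). intros e He.
    destruct (Happrox e He) as (z' & x' & [Nx' _] & _ & Dx).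
    rewrite <- Nx', edist_sym in *. pose proof (Hlip x x'). nra.
  - apply (eq_of_forall_Rabs_le _ _ (8 * axis_sum N)). intros e He.
    destruct (Happrox e He) as (z' & x' & [_ [Nzx' _]] & Dz & Dx).
    rewrite <- Nzx'. rewrite edist_sym in Dz, Dx.
    pose proof (Hlip (psub z x) (psub z' x')).
    pose proof (edist_psub z x z' x'). nra.
  - set (M := Rabs (fst z) + Rabs (snd z) + B).
    apply (ge0_of_forall_ge _ (4 * M)). intros e He.
    destruct (Happrox e He) as (z' & x' & [Nx' [_ Dzx']] & Dz & Dx).
    rewrite edist_sym in Dz, Dx. destruct (HB x' Nx') as [Bx1 Bx2].
    pose proof (Rabs_pos (fst z)); pose proof (Rabs_pos (snd z)); pose proof (Rabs_pos (fst x')).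
    pose proof (det_lipschitz z x z' x' M ltac:(unfold M; lra) ltac:(unfold M; lra)
                  ltac:(unfold M; lra) ltac:(unfold M; lra)) as Hdet.
    apply Rabs_le_between in Hdet.
    assert (0 <= M) by (unfold M; lra). nra.
Qed.

Lemma ccw_neighbour_unique N f :
  URTC N ->
  (forall z, sphere N z ->
     sphere N (f z) /\ N (psub z (f z)) = 1 /\ pos_oriented z (f z)) ->
  forall z w, sphere N z -> ccw_neighbour N z w -> w = f z.
Proof.
  intros [HN HURTC] Hf z w Hz [Nw [Nzw Dw]].
  destruct (Hf z Hz) as [Nfz [Nzfz Dfz]]. change (det z (f z) > 0) in Dfz.
  unfold sphere in *.
  destruct (HURTC z (0, 0) ltac:(rewrite psub0r; auto)) as [x1 [x2 [_ Hpair]]].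
  (* The third point [z - f z] of the two-point set lies on the negative side of [0z]. *)
  apply (two_point_set_eq _ x1 x2 w (f z) (psub z (f z)) Hpair).
  - rewrite N_psub0l; auto.
  - rewrite N_psub0l; auto.
  - rewrite psub_psub, N_psub0l; auto.
  - intro E. pose proof (det_psub_r z (f z)) as Hneg. rewrite E in Hneg. lra.
  - intro E. pose proof (det_psub_r z (f z)) as Hneg. rewrite E in Hneg. lra.
Qed.

Theorem lemma3 (N : pt -> R) (f : pt -> pt) :
  URTC N ->
  (forall z, sphere N z ->
     sphere N (f z) /\ N (psub z (f z)) = 1 /\ pos_oriented z (f z)) ->
  continuous_on_set (sphere N) f.
Proof.
  intros HURTC Hf. pose proof HURTC as [HN _].
  destruct (unit_sphere_bounded N HN) as [B HB].
  apply (closed_bounded_graph_continuous _ (ccw_neighbour N) f B).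
  - intros z Hz. destruct (Hf z Hz) as [Nfz [Nzfz Dfz]].
    repeat split; auto. apply Rlt_le, Dfz.
  - intros z x Hz Hx. apply (ccw_neighbour_unique N f HURTC Hf z x Hz Hx).
  - intros z x [Nx _]. apply HB, Nx.
  - apply ccw_neighbour_closed, HN.
Qed.
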